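(* Let $s>0$, $\kappa>0$, and put $q=e^{-2s\kappa^2}\in(0,1)$. Let $b\in\mathbb{C}$ and $n\ge0$. Then for every $y\in\mathbb{R}$, $$\frac{1}{\sqrt{2\pi s}}\int_{\mathbb{R}}H_n\big(b\,e^{i\kappa x},s\,\big|\,q\big)\,e^{ixy-\frac{x^2}{2s}}\,dx=q^{\frac{n^2}{4}}\,H_n\big(b\,e^{-s\kappa y},\,q^{n-3}s\,\big|\,q^{-1}\big)\,e^{-\frac{sy^2}{2}}.$$
   Context: For $r>0$, $r\neq1$ and $m\ge0$: $\{m\}_r=\frac{1-r^m}{1-r}$, $\{m\}_r!=\prod_{j=1}^m\{j\}_r$, $\{2m\}_r!!=\prod_{j=1}^m\{2j\}_r$, $\{0\}_r!=\{0\}_r!!=1$. For $0\le k\le\lfloor n/2\rfloor$, $c_{n,k}(r)=\frac{(-1)^kr^{k(k-1)}\{n\}_r!}{\{n-2k\}_r!\,\{2k\}_r!!}$, and $$H_n(z,s|r)=\sum_{k=0}^{\lfloor n/2\rfloor}c_{n,k}(r)\,s^kz^{n-2k}\quad(z\in\mathbb{C});$$ the left side uses $r=q$, the right side uses $r=q^{-1}$. *)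

From Stdlib Require Import Reals Lra.
Open Scope R_scope.

Definition Cplx := (R * R)%type.
Definition Cre (z : Cplx) : R := fst z.
Definition Cim (z : Cplx) : R := snd z.
Definition Cadd (z w : Cplx) : Cplx := (fst z + fst w, snd z + snd w).
Definition Cmul (z w : Cplx) : Cplx :=
  (fst z * fst w - snd z * snd w, fst z * snd w + snd z * fst w).
Definition Cscal (a : R) (z : Cplx) : Cplx := (a * fst z, a * snd z).
Definition C0 : Cplx := (0, 0).
Definition C1 : Cplx := (1, 0).
Fixpoint Cpow (z : Cplx) (m : nat) : Cplx :=
  match m with O => C1 | S m' => Cmul z (Cpow z m') end.
Definition Cexpi (t : R) : Cplx := (cos t, sin t).
Fixpoint Csum (f : nat -> Cplx) (m : nat) : Cplx :=
  match m with O => C0 | S m' => Cadd (Csum f m') (f m') end.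

Definition qnum (r : R) (m : nat) : R := (1 - r ^ m) / (1 - r).
Fixpoint qfact (r : R) (m : nat) : R :=
  match m with O => 1 | S m' => qfact r m' * qnum r (S m') end.
(* qdfact r m = {2m}_r!! = prod_{j=1}^m {2j}_r *)
Fixpoint qdfact (r : R) (m : nat) : R :=
  match m with O => 1 | S m' => qdfact r m' * qnum r (2 * S m') end.

Definition cnk (n k : nat) (r : R) : R :=
  (-1) ^ k * r ^ (k * (k - 1)) * qfact r n / (qfact r (n - 2 * k) * qdfact r k).

Definition Hq (n : nat) (z : Cplx) (s r : R) : Cplx :=
  Csum (fun k => Cscal (cnk n k r * s ^ k) (Cpow z (n - 2 * k))) (S (Nat.div2 n)).

Definition is_RInt_R (f : R -> R) (l : R) : Prop :=
  (forall a b : R, a <= b -> inhabited (Riemann_integrable f a b)) /\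
  (forall eps : R, 0 < eps -> exists M : R, forall (a b : R)
     (pr : Riemann_integrable f a b),
     a <= - M -> M <= b -> Rabs (RiemannInt pr - l) < eps).

Definition is_CInt_R (f : R -> Cplx) (l : Cplx) : Prop :=
  is_RInt_R (fun x => Cre (f x)) (Cre l) /\ is_RInt_R (fun x => Cim (f x)) (Cim l).

(* Expanding [H_n], the integrand is a finite sum of terms
   [b^m e^{i (m kappa + y) x} e^{-x^2/(2s)}] with [m = n - 2k], so everything
   reduces to the Fourier transform of the Gaussian,
   [int e^{-al x^2} cos (t x) dx = sqrt (PI / al) e^{-t^2/(4 al)}] (the sine part is odd).
   The Gaussian integral itself comes from the constancy of
   [int_0^1 e^{-al x^2 (1+t^2)} / (1+t^2) dt + al (int_0^x e^{-al u^2} du)^2];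
   the transform from the ODE [G' = - t G / (2 al)] satisfied by the truncated
   integral up to a boundary term that vanishes with the Gaussian tail.
   Each term then matches the right-hand side because
   [e^{-s (m kappa + y)^2 / 2} = q^{m^2/4} e^{-s kappa y m} e^{-s y^2 / 2}] and
   [c_{n,k}(q) = q^{2nk - 3k - k^2} c_{n,k}(1/q)]. *)

From Coquelicot Require Import Coquelicot.
From Stdlib Require Import Reals Lra Lia.
Open Scope R_scope.

Lemma continuous_of_ex_derive (f : R -> R) x : ex_derive f x -> continuous f x.
Proof. apply (ex_derive_continuous (K:=R_AbsRing) (V:=R_NormedModule)). Qed.

Lemma ex_RInt_of_continuous (f : R -> R) a b :
  (forall x, continuous f x) -> ex_RInt f a b.
Proof.
intros H; apply (ex_RInt_continuous (V:=R_CompleteNormedModule)); intros; apply H.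
Qed.

Lemma continuity_2d_pt_pow (f : R -> R -> R) n x y :
  continuity_2d_pt f x y -> continuity_2d_pt (fun u v => f u v ^ n) x y.
Proof.
intros H; induction n as [|n IH].
- apply (continuity_2d_pt_ext (fun _ _ => 1)); [reflexivity|apply continuity_2d_pt_const].
- apply (continuity_2d_pt_ext (fun u v => f u v * f u v ^ n)); [reflexivity|].
  now apply continuity_2d_pt_mult.
Qed.

Ltac solve_continuity_2d :=
  repeat first
   [ apply continuity_2d_pt_id1 | apply continuity_2d_pt_id2
   | apply continuity_2d_pt_mult | apply continuity_2d_pt_plus
   | apply continuity_2d_pt_minus | apply continuity_2d_pt_opp
   | apply continuity_2d_pt_pow
   | apply (continuity_1d_2d_pt_comp exp);
       [apply derivable_continuous, derivable_exp|]
   | apply (continuity_1d_2d_pt_comp cos); [apply continuity_cos|]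
   | apply (continuity_1d_2d_pt_comp sin); [apply continuity_sin|]
   | apply continuity_2d_pt_const ].

Lemma is_derive_RInt_param_cont (f df : R -> R -> R) a b x :
  (forall u t, is_derive (fun z => f z t) u (df u t)) ->
  (forall u t, continuity_2d_pt df u t) ->
  (forall u, ex_RInt (f u) a b) ->
  is_derive (fun u => RInt (f u) a b) x (RInt (df x) a b).
Proof.
intros Hd Hc Hi.
assert (HD : forall u t, Derive (fun z => f z t) u = df u t).
{ intros; apply is_derive_unique, Hd. }
rewrite (RInt_ext (df x) (fun t => Derive (fun u => f u t) x)) by (intros; now rewrite HD).
apply (is_derive_RInt_param f a b x).
- apply filter_forall; intros; eexists; apply Hd.
- intros t _. apply (continuity_2d_pt_ext df); [intros; now rewrite HD|apply Hc].
- apply filter_forall; intros; apply Hi.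
Qed.

Lemma RInt_plus_R (f g : R -> R) a b : ex_RInt f a b -> ex_RInt g a b ->
  RInt (fun x => f x + g x) a b = RInt f a b + RInt g a b.
Proof. apply (RInt_plus (V:=R_CompleteNormedModule)). Qed.

Lemma RInt_scal_R (f : R -> R) a b c :
  ex_RInt f a b -> RInt (fun x => c * f x) a b = c * RInt f a b.
Proof. apply (RInt_scal (V:=R_CompleteNormedModule)). Qed.

Lemma RInt_Chasles_R (f : R -> R) a b c : ex_RInt f a b -> ex_RInt f b c ->
  RInt f a b + RInt f b c = RInt f a c.
Proof. apply (RInt_Chasles (V:=R_CompleteNormedModule)). Qed.

Lemma RInt_comp_opp (f : R -> R) a b : (forall x, continuous f x) ->
  RInt (fun x => f (- x)) a b = RInt f (- b) (- a).
Proof.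
intros Hc.
assert (H := RInt_comp_lin (V:=R_CompleteNormedModule) f (-1) 0 a b
  (ex_RInt_of_continuous _ _ _ Hc)).
rewrite <- (opp_RInt_swap (V:=R_CompleteNormedModule) f (- a) (- b))
  by (apply ex_RInt_of_continuous, Hc).
replace (-1 * a + 0) with (- a) in H by ring; replace (-1 * b + 0) with (- b) in H by ring.
rewrite <- H, <- (RInt_opp (V:=R_CompleteNormedModule)).
- apply RInt_ext; intros x _; cbn; unfold mult; cbn.
  replace (-1 * x + 0) with (- x) by ring; ring.
- apply ex_RInt_of_continuous; intros x.
  apply (continuous_scal_r (V:=R_NormedModule)).
  apply (continuous_comp (fun y => -1 * y + 0) f); [|apply Hc].
  apply continuous_of_ex_derive; auto_derive; auto.
Qed.

Lemma RInt_even (f : R -> R) A : (forall x, continuous f x) ->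
  (forall x, f (- x) = f x) -> RInt f (- A) 0 = RInt f 0 A.
Proof.
intros Hc He.
transitivity (RInt (fun x => f (- x)) 0 A).
- now rewrite RInt_comp_opp, Ropp_0.
- now apply RInt_ext.
Qed.

Lemma RInt_odd (f : R -> R) A : (forall x, continuous f x) ->
  (forall x, f (- x) = - f x) -> RInt f (- A) A = 0.
Proof.
intros Hc Ho.
rewrite <- (RInt_Chasles_R f (- A) 0 A) by (apply ex_RInt_of_continuous, Hc).
assert (E : RInt f (- A) 0 = - RInt f 0 A).
{ rewrite <- Ropp_0, <- RInt_comp_opp, Ropp_0 by exact Hc.
  rewrite (RInt_ext _ (fun x => opp (f x))) by (intros; apply Ho).
  now rewrite (RInt_opp (V:=R_CompleteNormedModule)) by (apply ex_RInt_of_continuous, Hc). }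
rewrite E; lra.
Qed.

Lemma Rabs_sub_le_of_derive_bound (f df : R -> R) a b C :
  (forall u, is_derive f u (df u)) -> (forall u, continuous df u) ->
  (forall u, Rmin a b <= u <= Rmax a b -> Rabs (df u) <= C) ->
  Rabs (f b - f a) <= C * Rabs (b - a).
Proof.
intros Hd Hc.
assert (K : forall a b, a <= b -> (forall u, a <= u <= b -> Rabs (df u) <= C) ->
   Rabs (f b - f a) <= C * Rabs (b - a)).
{ clear a b; intros a b Hab Hb.
  assert (H := is_RInt_derive (V:=R_CompleteNormedModule) f df a b
    (fun x _ => Hd x) (fun x _ => Hc x)).
  apply (is_RInt_unique (V:=R_CompleteNormedModule)) in H.
  assert (H2 := abs_RInt_le_const df a b C Hab (ex_RInt_of_continuous _ _ _ Hc) Hb).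
  rewrite H in H2; cbn in H2.
  rewrite (Rabs_right (b - a)) by lra; unfold minus, plus, opp in H2; cbn in H2.
  unfold Rminus; lra. }
intros Hb; destruct (Rle_dec a b) as [Hab|Hab].
- apply K; auto; intros u Hu; apply Hb; rewrite Rmin_left, Rmax_right; lra.
- rewrite <- Rabs_Ropp, Ropp_minus_distr, <- (Rabs_Ropp (b - a)), Ropp_minus_distr.
  apply K; [lra|]; intros u Hu; apply Hb; rewrite Rmin_right, Rmax_left; lra.
Qed.

Lemma exp_le_compat x y : x <= y -> exp x <= exp y.
Proof.
intros [Hlt | ->]; [now left; apply exp_increasing|now right].
Qed.

(** * The Gaussian integral *)

Section GaussianIntegral.
Variable al : R.
Hypothesis al_pos : 0 < al.

Definition gauss (x : R) : R := exp (- (al * x ^ 2)).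
Definition gauss_prim (x : R) : R := RInt gauss 0 x.

Lemma gauss_pos x : 0 < gauss x.
Proof. apply exp_pos. Qed.

Lemma gauss_even x : gauss (- x) = gauss x.
Proof. unfold gauss; f_equal; ring. Qed.

Lemma continuous_gauss x : continuous gauss x.
Proof. apply continuous_of_ex_derive; unfold gauss; auto_derive; auto. Qed.

Lemma ex_RInt_gauss a b : ex_RInt gauss a b.
Proof. apply ex_RInt_of_continuous, continuous_gauss. Qed.

Lemma is_derive_gauss_prim (x : R) : is_derive gauss_prim x (gauss x).
Proof.
apply (is_derive_RInt gauss gauss_prim 0 x).
- apply filter_forall; intros.
  apply (RInt_correct (V:=R_CompleteNormedModule)), ex_RInt_gauss.
- apply continuous_gauss.
Qed.

Lemma gauss_prim_ge0 x : 0 <= x -> 0 <= gauss_prim x.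
Proof.
intros Hx; apply RInt_ge_0; auto; [apply ex_RInt_gauss|].
intros; apply Rlt_le, gauss_pos.
Qed.

Lemma gauss_prim_scale x : gauss_prim x = x * RInt (fun t => gauss (x * t)) 0 1.
Proof.
unfold gauss_prim.
assert (H := RInt_comp_lin (V:=R_CompleteNormedModule) gauss x 0 0 1).
replace (x * 0 + 0) with 0 in H by ring; replace (x * 1 + 0) with x in H by ring.
rewrite <- H by apply ex_RInt_gauss.
rewrite (RInt_ext _ (fun t => x * gauss (x * t)))
  by (intros t _; now rewrite Rplus_0_r).
apply RInt_scal_R, ex_RInt_of_continuous; intros t.
apply continuous_of_ex_derive; unfold gauss; auto_derive; auto.
Qed.

Definition gauss_aux (x : R) : R :=
  RInt (fun t => exp (- (al * x ^ 2 * (1 + t ^ 2))) / (1 + t ^ 2)) 0 1.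

Lemma is_derive_gauss_aux (x : R) :
  is_derive gauss_aux x (- (2 * al) * gauss x * gauss_prim x).
Proof.
assert (E : @eq R (RInt (fun t => - (2 * al * x) * exp (- (al * x ^ 2 * (1 + t ^ 2)))) 0 1)
                  (- (2 * al) * gauss x * gauss_prim x)).
{ rewrite gauss_prim_scale.
  rewrite (RInt_ext _ (fun t => (- (2 * al * x) * gauss x) * gauss (x * t))).
  - rewrite RInt_scal_R; [ring|].
    apply ex_RInt_of_continuous; intros t.
    apply continuous_of_ex_derive; unfold gauss; auto_derive; auto.
  - intros t _; unfold gauss.
    rewrite (Rmult_assoc _ (exp _)), <- exp_plus; do 3 f_equal; ring. }
rewrite <- E.
apply (is_derive_RInt_param_cont
  (fun u t => exp (- (al * u ^ 2 * (1 + t ^ 2))) / (1 + t ^ 2))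
  (fun u t => - (2 * al * u) * exp (- (al * u ^ 2 * (1 + t ^ 2))))).
- intros u t; auto_derive; [nra|].
  change (u * (u * 1)) with (u ^ 2); change (t * (t * 1)) with (t ^ 2); field; nra.
- intros u t; solve_continuity_2d.
- intros u; apply ex_RInt_of_continuous; intros t.
  apply continuous_of_ex_derive; auto_derive; nra.
Qed.

(* The classical trick: [gauss_aux + al * gauss_prim ^ 2] has derivative zero,
   and at [0] it equals [RInt (fun t => / (1 + t ^ 2)) 0 1 = atan 1]. *)
Lemma gauss_aux_add_prim_sq (x : R) : gauss_aux x + al * gauss_prim x ^ 2 = PI / 4.
Proof.
set (h u := gauss_aux u + al * gauss_prim u ^ 2).
assert (Hd : forall u : R, is_derive h u 0).
{ intros u.
  assert (H : is_derive h u (plus (- (2 * al) * gauss u * gauss_prim u)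
                                  (scal al (INR 2 * gauss u * gauss_prim u ^ 1)))).
  { apply (is_derive_plus (K:=R_AbsRing) (V:=R_NormedModule)); [apply is_derive_gauss_aux|].
    apply is_derive_scal, (is_derive_pow gauss_prim 2 u (gauss u)), is_derive_gauss_prim. }
  replace (plus _ _) with 0 in H; [exact H|].
  unfold plus, scal; cbn; unfold mult; cbn; ring. }
assert (Hc := Rabs_sub_le_of_derive_bound h (fun _ => 0) 0 x 0 Hd
  (continuous_const 0) (fun _ _ => Req_le _ _ Rabs_R0)).
rewrite Rmult_0_l in Hc.
assert (E : h x = h 0) by (apply Rminus_diag_uniq, Rabs_eq_0; apply Rle_antisym; auto; apply Rabs_pos).
change (h x = PI / 4); rewrite E; unfold h, gauss_aux, gauss_prim.
rewrite (RInt_point (V:=R_CompleteNormedModule)), (RInt_ext _ (fun t => / (1 + t ^ 2))).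
- assert (H := is_RInt_derive (V:=R_CompleteNormedModule) atan (fun t => / (1 + t ^ 2)) 0 1).
  rewrite (is_RInt_unique (V:=R_CompleteNormedModule) _ _ _ _ (H
    ltac:(intros; apply is_derive_Reals, derivable_pt_lim_atan)
    ltac:(intros; apply continuous_of_ex_derive; auto_derive; nra))).
  rewrite atan_1, atan_0; cbn; unfold zero, minus, plus, opp; cbn; ring.
- intros t _; replace (- (al * 0 ^ 2 * (1 + t ^ 2))) with 0 by ring.
  rewrite exp_0; apply Rmult_1_l.
Qed.

Lemma gauss_aux_bounds (x : R) : 0 <= gauss_aux x <= gauss x.
Proof.
assert (Hex : ex_RInt (fun t => exp (- (al * x ^ 2 * (1 + t ^ 2))) / (1 + t ^ 2)) 0 1).
{ apply ex_RInt_of_continuous; intros z; apply continuous_of_ex_derive; auto_derive; nra. }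
split.
- apply RInt_ge_0; [lra|auto|]; intros t _.
  apply Rlt_le, Rdiv_lt_0_compat; [apply exp_pos|nra].
- replace (gauss x) with (RInt (fun _ => gauss x) 0 1)
    by (rewrite (RInt_const (V:=R_CompleteNormedModule)); cbn; unfold mult; cbn; ring).
  apply RInt_le; [lra|auto|apply (ex_RInt_const (V:=R_NormedModule))|].
  intros t _; unfold gauss.
  assert (Ht : 1 <= 1 + t ^ 2) by nra.
  assert (He : exp (- (al * x ^ 2 * (1 + t ^ 2))) <= exp (- (al * x ^ 2))).
  { apply exp_le_compat; assert (0 <= al * x ^ 2) by nra; nra. }
  apply Rle_trans with (exp (- (al * x ^ 2 * (1 + t ^ 2)))); [|exact He].
  unfold Rdiv; rewrite <- (Rmult_1_r (exp _)) at 2.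
  apply Rmult_le_compat_l; [apply Rlt_le, exp_pos|].
  rewrite <- Rinv_1; apply Rinv_le_contravar; lra.
Qed.

Definition gauss_half : R := sqrt (PI / al) / 2.

Lemma gauss_half_pos : 0 < gauss_half.
Proof.
unfold gauss_half; apply Rdiv_lt_0_compat; [|lra].
apply sqrt_lt_R0, Rdiv_lt_0_compat; [apply PI_RGT_0|lra].
Qed.

Lemma gauss_half_sq : al * gauss_half ^ 2 = PI / 4.
Proof.
unfold gauss_half.
replace ((sqrt (PI / al) / 2) ^ 2) with (sqrt (PI / al) ^ 2 / 4) by field.
rewrite pow2_sqrt by (apply Rlt_le, Rdiv_lt_0_compat; [apply PI_RGT_0|lra]).
field; lra.
Qed.

Lemma gauss_small eps : 0 < eps ->
  exists M, 0 < M /\ forall x, M <= x -> gauss x < eps.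
Proof.
intros He; exists (1 + / (al * eps)).
assert (Hi : 0 < / (al * eps)) by (apply Rinv_0_lt_compat; nra).
split; [lra|]; intros x Hx.
assert (Hy : / eps <= al * x ^ 2).
{ replace (/ eps) with (al * / (al * eps)) by (field; lra).
  apply Rmult_le_compat_l; [lra|]; nra. }
assert (Hp : 0 < / eps) by (apply Rinv_0_lt_compat; lra).
assert (Hexp := exp_ineq1_le (al * x ^ 2)).
unfold gauss; rewrite exp_Ropp, <- (Rinv_inv eps).
apply Rinv_lt_contravar; [apply Rmult_lt_0_compat; [exact Hp|apply exp_pos]|lra].
Qed.

Lemma gauss_prim_lim eps : 0 < eps ->
  exists M, 0 < M /\ forall x, M <= x -> Rabs (gauss_prim x - gauss_half) < eps.
Proof.
intros He.
assert (HL := gauss_half_pos).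
destruct (gauss_small (eps * al * gauss_half)) as [M [HM HMx]];
  [apply Rmult_lt_0_compat; nra|].
exists M; split; [exact HM|]; intros x Hx.
assert (Hsum := gauss_aux_add_prim_sq x); assert (Hb := gauss_aux_bounds x).
assert (HJ := gauss_prim_ge0 x ltac:(lra)); assert (HL2 := gauss_half_sq).
specialize (HMx x Hx).
assert (Hsq : al * (gauss_half - gauss_prim x) * (gauss_half + gauss_prim x) = gauss_aux x)
  by nra.
assert (HJL : gauss_prim x <= gauss_half).
{ apply Rnot_lt_le; intros Hlt.
  assert (0 < (gauss_prim x - gauss_half) * (gauss_half + gauss_prim x))
    by (apply Rmult_lt_0_compat; lra).
  nra. }
assert (Hd : Rabs (gauss_prim x - gauss_half) * gauss_half * al < eps * gauss_half * al).
{ rewrite Rabs_left1 by lra.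
  assert (0 <= al * (gauss_half - gauss_prim x) * gauss_prim x)
    by (apply Rmult_le_pos; [apply Rmult_le_pos|]; lra).
  nra. }
apply Rmult_lt_reg_r with (gauss_half * al); [nra|lra].
Qed.
End GaussianIntegral.

(** * Fourier transform of the Gaussian *)

Section GaussianFourier.
Variable al : R.
Hypothesis al_pos : 0 < al.

Definition gauss_cos (t x : R) : R := gauss al x * cos (t * x).
Definition gauss_sin (t x : R) : R := gauss al x * sin (t * x).
Definition gauss_cos_trunc (A t : R) : R := RInt (gauss_cos t) (- A) A.

Lemma continuous_gauss_cos t x : continuous (gauss_cos t) x.
Proof. apply continuous_of_ex_derive; unfold gauss_cos, gauss; auto_derive; auto. Qed.

Lemma continuous_gauss_sin t x : continuous (gauss_sin t) x.
Proof. apply continuous_of_ex_derive; unfold gauss_sin, gauss; auto_derive; auto. Qed.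

(* Integration by parts against [d/dx (gauss x sin (t x))], using
   [d/dx gauss x = - 2 al x gauss x]. *)
Lemma RInt_x_gauss_sin A t :
  RInt (fun x => - (x * gauss al x * sin (t * x))) (- A) A
  = (2 * gauss al A * sin (t * A) - t * gauss_cos_trunc A t) / (2 * al).
Proof.
set (dg x := - (x * gauss al x * sin (t * x))).
assert (Hdg : ex_RInt dg (- A) A).
{ apply ex_RInt_of_continuous; intros x; apply continuous_of_ex_derive.
  unfold dg, gauss; auto_derive; auto. }
assert (Hcos : ex_RInt (gauss_cos t) (- A) A)
  by (apply ex_RInt_of_continuous, continuous_gauss_cos).
assert (H := is_RInt_derive (V:=R_CompleteNormedModule) (fun x => gauss al x * sin (t * x))
  (fun x => 2 * al * dg x + t * gauss_cos t x) (- A) A).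
apply (is_RInt_unique (V:=R_CompleteNormedModule)) in H.
- rewrite RInt_plus_R, !RInt_scal_R, gauss_even in H
    by (auto; apply (ex_RInt_scal (V:=R_NormedModule)); auto).
  replace (t * - A) with (- (t * A)) in H by ring; rewrite sin_neg in H.
  unfold gauss_cos_trunc; revert H.
  generalize (RInt dg (- A) A : R) (RInt (gauss_cos t) (- A) A : R); intros I1 I2 H.
  unfold minus, plus, opp in H; cbn in H.
  apply Rmult_eq_reg_l with (2 * al); [field_simplify; lra|lra].
- intros x _; unfold dg, gauss_cos, gauss; auto_derive; auto.
  change (x * (x * 1)) with (x ^ 2); ring.
- intros x _; apply (continuous_plus (V:=R_NormedModule)).
  + apply (continuous_scal_r (V:=R_NormedModule)), continuous_of_ex_derive.
    unfold dg, gauss; auto_derive; auto.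
  + apply (continuous_scal_r (V:=R_NormedModule)), continuous_gauss_cos.
Qed.

Lemma is_derive_gauss_cos_trunc A (t : R) : is_derive (gauss_cos_trunc A) t
  ((2 * gauss al A * sin (t * A) - t * gauss_cos_trunc A t) / (2 * al)).
Proof.
rewrite <- RInt_x_gauss_sin.
apply (is_derive_RInt_param_cont (fun u x => gauss al x * cos (u * x))
  (fun u x => - (x * gauss al x * sin (u * x)))).
- intros u x; unfold gauss; auto_derive; auto.
  change (x * (x * 1)) with (x ^ 2); ring.
- intros u x; unfold gauss; solve_continuity_2d.
- intros u; apply ex_RInt_of_continuous, continuous_gauss_cos.
Qed.

Lemma gauss_cos_trunc_0 A : gauss_cos_trunc A 0 = 2 * gauss_prim al A.
Proof.
unfold gauss_cos_trunc, gauss_prim.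
rewrite (RInt_ext _ (gauss al))
  by (intros x _; unfold gauss_cos; rewrite Rmult_0_l, cos_0; apply Rmult_1_r).
rewrite <- (RInt_Chasles_R (gauss al) (- A) 0 A) by apply ex_RInt_gauss.
rewrite RInt_even by (apply continuous_gauss || apply gauss_even); ring.
Qed.

(* [exp (t ^ 2 / (4 al))] is an integrating factor for the ODE of
   [is_derive_gauss_cos_trunc]: only the boundary term survives. *)
Lemma is_derive_gauss_cos_trunc_weighted A (t : R) :
  is_derive (fun u => exp (u ^ 2 / (4 * al)) * gauss_cos_trunc A u) t
    (exp (t ^ 2 / (4 * al)) * gauss al A * sin (t * A) / al).
Proof.
assert (H : is_derive (fun u => exp (u ^ 2 / (4 * al)) * gauss_cos_trunc A u) t
  (plus (mult (2 * t / (4 * al) * exp (t ^ 2 / (4 * al))) (gauss_cos_trunc A t))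
    (mult (exp (t ^ 2 / (4 * al)))
      ((2 * gauss al A * sin (t * A) - t * gauss_cos_trunc A t) / (2 * al))))).
{ apply (is_derive_mult (K:=R_AbsRing) (fun u => exp (u ^ 2 / (4 * al))) (gauss_cos_trunc A));
    [|apply is_derive_gauss_cos_trunc|].
  - auto_derive; auto.
    change (t * (t * 1)) with (t ^ 2); unfold Rdiv; field; lra.
  - intros; apply Rmult_comm. }
replace (plus _ _) with (exp (t ^ 2 / (4 * al)) * gauss al A * sin (t * A) / al) in H;
  [exact H|].
unfold plus, mult; cbn; field; lra.
Qed.

Lemma gauss_cos_trunc_near A t : 0 <= A ->
  Rabs (exp (t ^ 2 / (4 * al)) * gauss_cos_trunc A t - 2 * gauss_prim al A)
    <= exp (t ^ 2 / (4 * al)) * gauss al A / al * Rabs t.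
Proof.
intros HA.
set (w u := exp (u ^ 2 / (4 * al))).
set (dh u := w u * gauss al A * sin (u * A) / al).
replace (2 * gauss_prim al A) with (w 0 * gauss_cos_trunc A 0)
  by (unfold w; rewrite gauss_cos_trunc_0; replace (0 ^ 2 / (4 * al)) with 0 by (field; lra);
      rewrite exp_0; ring).
assert (Hbound : forall u, Rmin 0 t <= u <= Rmax 0 t -> Rabs (dh u) <= w t * gauss al A / al).
{ intros u Hu.
  assert (Hu2 : u ^ 2 <= t ^ 2).
  { destruct (Rle_dec 0 t).
    - rewrite Rmin_left, Rmax_right in Hu by lra; nra.
    - rewrite Rmin_right, Rmax_left in Hu by lra; nra. }
  assert (Hw : w u <= w t).
  { apply exp_le_compat; unfold Rdiv; apply Rmult_le_compat_r; [|exact Hu2].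
    apply Rlt_le, Rinv_0_lt_compat; lra. }
  assert (Hsin : Rabs (sin (u * A)) <= 1) by (apply Rabs_le, SIN_bound).
  assert (Hg := gauss_pos al A); assert (Hwu : 0 < w u) by apply exp_pos.
  assert (Hal : 0 < / al) by (apply Rinv_0_lt_compat; lra).
  unfold dh, Rdiv; rewrite !Rabs_mult.
  rewrite (Rabs_pos_eq (w u)), (Rabs_pos_eq (gauss al A)), (Rabs_pos_eq (/ al)) by lra.
  apply Rmult_le_compat_r; [lra|].
  rewrite <- (Rmult_1_r (w t * gauss al A)).
  apply Rmult_le_compat; try nra; apply Rabs_pos. }
assert (H := Rabs_sub_le_of_derive_bound _ dh 0 t _ (is_derive_gauss_cos_trunc_weighted A)
  ltac:(intros u; apply continuous_of_ex_derive; unfold dh, w; auto_derive; auto) Hbound).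
rewrite Rminus_0_r in H; exact H.
Qed.

Lemma gauss_cos_trunc_lim t eps : 0 < eps -> exists M, 0 < M /\ forall A, M <= A ->
  Rabs (gauss_cos_trunc A t - 2 * gauss_half al * exp (- (t ^ 2 / (4 * al)))) < eps.
Proof.
intros He.
set (w := exp (t ^ 2 / (4 * al))).
set (D := w / al * Rabs t).
assert (HD : 0 <= D).
{ apply Rmult_le_pos; [|apply Rabs_pos].
  apply Rlt_le, Rdiv_lt_0_compat; [apply exp_pos|lra]. }
destruct (gauss_small al al_pos (eps / (2 * (D + 1)))) as [M1 [HM1 HM1x]];
  [apply Rdiv_lt_0_compat; lra|].
destruct (gauss_prim_lim al al_pos (eps / 4)) as [M2 [HM2 HM2x]]; [lra|].
exists (Rmax M1 M2); split; [apply Rlt_le_trans with M1; [lra|apply Rmax_l]|].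
intros A HA.
assert (HA1 : M1 <= A) by (apply Rle_trans with (Rmax M1 M2); [apply Rmax_l|lra]).
assert (HA2 : M2 <= A) by (apply Rle_trans with (Rmax M1 M2); [apply Rmax_r|lra]).
specialize (HM1x A HA1); specialize (HM2x A HA2).
assert (Hnear := gauss_cos_trunc_near A t ltac:(lra)); fold w in Hnear.
replace (w * gauss al A / al * Rabs t) with (D * gauss al A) in Hnear by (unfold D; field; lra).
assert (HDg : D * gauss al A < eps / 2).
{ apply Rle_lt_trans with (D * (eps / (2 * (D + 1)))).
  - apply Rmult_le_compat_l; lra.
  - apply Rmult_lt_reg_r with (2 * (D + 1)); [lra|]; field_simplify; lra. }
assert (Hw : exp (- (t ^ 2 / (4 * al))) * w = 1)
  by (unfold w; rewrite <- exp_plus, Rplus_opp_l; apply exp_0).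
assert (Hinv : 0 < exp (- (t ^ 2 / (4 * al))) <= 1).
{ split; [apply exp_pos|]; rewrite <- exp_0; apply exp_le_compat.
  assert (0 <= t ^ 2 / (4 * al)) by (apply Rdiv_le_0_compat; [apply pow2_ge_0|lra]); lra. }
replace (gauss_cos_trunc A t - 2 * gauss_half al * exp (- (t ^ 2 / (4 * al))))
  with (exp (- (t ^ 2 / (4 * al)))
        * ((w * gauss_cos_trunc A t - 2 * gauss_prim al A)
           + 2 * (gauss_prim al A - gauss_half al)))
  by (rewrite Rmult_plus_distr_l, Rmult_minus_distr_l, <- Rmult_assoc, Hw; ring).
rewrite Rabs_mult, Rabs_pos_eq by lra.
assert (Htri := Rabs_triang (w * gauss_cos_trunc A t - 2 * gauss_prim al A)
                            (2 * (gauss_prim al A - gauss_half al))).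
rewrite (Rabs_mult 2), (Rabs_pos_eq 2) in Htri by lra.
assert (0 <= Rabs (w * gauss_cos_trunc A t - 2 * gauss_prim al A
                   + 2 * (gauss_prim al A - gauss_half al))) by apply Rabs_pos.
nra.
Qed.
End GaussianFourier.

(** * Improper integrals *)

(* The counterpart of [is_RInt_R] for Coquelicot's total [RInt], which avoids
   proof-carrying [RiemannInt]. *)
Definition is_RInt_improper (f : R -> R) (l : R) : Prop :=
  (forall a b, ex_RInt f a b) /\
  (forall eps, 0 < eps -> exists M, forall a b, a <= - M -> M <= b ->
     Rabs (RInt f a b - l) < eps).

Lemma is_RInt_R_of_improper f l : is_RInt_improper f l -> is_RInt_R f l.
Proof.
intros [Hex Hlim]; split.
- intros a b _; constructor; apply ex_RInt_Reals_0, Hex.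
- intros eps He; destruct (Hlim eps He) as [M HM]; exists M.
  intros a b pr Ha Hb; rewrite <- RInt_Reals; now apply HM.
Qed.

Lemma is_RInt_improper_ext f g l :
  (forall x, f x = g x) -> is_RInt_improper f l -> is_RInt_improper g l.
Proof.
intros E [Hex Hlim]; split.
- intros a b; apply (ex_RInt_ext (V:=R_NormedModule) f); auto.
- intros eps He; destruct (Hlim eps He) as [M HM]; exists M.
  intros a b Ha Hb; rewrite <- (RInt_ext f); auto.
Qed.

Lemma is_RInt_improper_zero : is_RInt_improper (fun _ => 0) 0.
Proof.
split.
- intros a b; apply (ex_RInt_const (V:=R_NormedModule)).
- intros eps He; exists 0; intros a b _ _.
  rewrite (RInt_const (V:=R_CompleteNormedModule)); cbn; unfold scal, mult; cbn.
  rewrite Rmult_0_r, Rminus_0_r, Rabs_R0; exact He.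
Qed.

Lemma is_RInt_improper_plus f g l1 l2 : is_RInt_improper f l1 -> is_RInt_improper g l2 ->
  is_RInt_improper (fun x => f x + g x) (l1 + l2).
Proof.
intros [Hf Hfl] [Hg Hgl]; split.
- intros a b; apply (ex_RInt_plus (V:=R_NormedModule)); auto.
- intros eps He.
  destruct (Hfl (eps / 2)) as [M HM]; [lra|]; destruct (Hgl (eps / 2)) as [N HN]; [lra|].
  exists (Rmax M N); intros a b Ha Hb.
  assert (HMN := Rmax_l M N); assert (HNM := Rmax_r M N).
  rewrite RInt_plus_R by auto.
  specialize (HM a b ltac:(lra) ltac:(lra)); specialize (HN a b ltac:(lra) ltac:(lra)).
  apply Rle_lt_trans with (Rabs (RInt f a b - l1) + Rabs (RInt g a b - l2)); [|lra].
  replace (RInt f a b + RInt g a b - (l1 + l2))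
    with ((RInt f a b - l1) + (RInt g a b - l2)) by ring.
  apply Rabs_triang.
Qed.

Lemma is_RInt_improper_scal c f l :
  is_RInt_improper f l -> is_RInt_improper (fun x => c * f x) (c * l).
Proof.
intros [Hf Hfl]; split.
- intros a b; apply (ex_RInt_scal (V:=R_NormedModule)); auto.
- intros eps He.
  assert (Hc := Rabs_pos c).
  destruct (Hfl (eps / (Rabs c + 1))) as [M HM]; [apply Rdiv_lt_0_compat; lra|].
  exists M; intros a b Ha Hb.
  rewrite RInt_scal_R, <- Rmult_minus_distr_l, Rabs_mult by auto.
  specialize (HM a b Ha Hb).
  apply Rle_lt_trans with (Rabs c * (eps / (Rabs c + 1))).
  + apply Rmult_le_compat_l; lra.
  + apply Rmult_lt_reg_r with (Rabs c + 1); [lra|]; field_simplify; lra.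
Qed.

Section GaussianDominated.
Variable al : R.
Hypothesis al_pos : 0 < al.

Lemma gauss_prim_odd x : gauss_prim al (- x) = - gauss_prim al x.
Proof.
unfold gauss_prim.
rewrite <- (opp_RInt_swap (V:=R_CompleteNormedModule)) by apply ex_RInt_gauss.
rewrite RInt_even by (apply continuous_gauss || apply gauss_even); reflexivity.
Qed.

Lemma Rabs_RInt_le_gauss_prim (f : R -> R) c d : c <= d ->
  (forall x, continuous f x) -> (forall x, Rabs (f x) <= gauss al x) ->
  Rabs (RInt f c d) <= gauss_prim al d - gauss_prim al c.
Proof.
intros Hcd Hc Hb.
assert (E : @eq R (RInt (gauss al) c d) (gauss_prim al d - gauss_prim al c)).
{ unfold gauss_prim.
  rewrite <- (RInt_Chasles_R (gauss al) 0 c d) by apply ex_RInt_gauss; lra. }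
rewrite <- E.
eapply Rle_trans; [apply abs_RInt_le; [exact Hcd|apply ex_RInt_of_continuous, Hc]|].
apply RInt_le; auto; [|apply ex_RInt_gauss].
apply ex_RInt_of_continuous; intros x; apply (continuous_comp f Rabs); [apply Hc|].
apply continuous_Rabs.
Qed.

(* Truncations [RInt f a b] are within the Gaussian tails of the symmetric ones. *)
Lemma is_RInt_improper_of_sym (f : R -> R) l : (forall x, continuous f x) ->
  (forall x, Rabs (f x) <= gauss al x) ->
  (forall eps, 0 < eps -> exists M, 0 < M /\ forall A, M <= A ->
     Rabs (RInt f (- A) A - l) < eps) ->
  is_RInt_improper f l.
Proof.
intros Hc Hb Hsym; split; [intros; apply ex_RInt_of_continuous, Hc|].
intros eps He.
destruct (Hsym (eps / 2)) as [M1 [HM1 HM1x]]; [lra|].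
destruct (gauss_prim_lim al al_pos (eps / 8)) as [M2 [HM2 HM2x]]; [lra|].
set (A := Rmax M1 M2).
assert (HA1 : M1 <= A) by apply Rmax_l; assert (HA2 : M2 <= A) by apply Rmax_r.
exists A; intros a b Ha Hb'.
assert (Ex : forall c d, ex_RInt f c d) by (intros; apply ex_RInt_of_continuous, Hc).
rewrite <- (RInt_Chasles_R f a (- A) b), <- (RInt_Chasles_R f (- A) A b) by auto.
assert (T1 := Rabs_RInt_le_gauss_prim f a (- A) ltac:(lra) Hc Hb).
assert (T2 := Rabs_RInt_le_gauss_prim f A b ltac:(lra) Hc Hb).
rewrite gauss_prim_odd in T1.
replace (gauss_prim al a) with (- gauss_prim al (- a)) in T1
  by (rewrite gauss_prim_odd; ring).
assert (K1 := HM2x (- a) ltac:(lra)); assert (K2 := HM2x b ltac:(lra)).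
assert (K3 := HM2x A ltac:(lra)); assert (K4 := HM1x A ltac:(lra)).
apply Rabs_lt_between in K1, K2, K3, K4; apply Rabs_le_between in T1, T2.
apply Rabs_lt_between; lra.
Qed.

Lemma is_RInt_improper_gauss_cos t :
  is_RInt_improper (gauss_cos al t) (2 * gauss_half al * exp (- (t ^ 2 / (4 * al)))).
Proof.
apply is_RInt_improper_of_sym; [apply continuous_gauss_cos| |].
- intros x; unfold gauss_cos; rewrite Rabs_mult, (Rabs_pos_eq (gauss al x))
    by apply Rlt_le, gauss_pos.
  assert (Rabs (cos (t * x)) <= 1) by (apply Rabs_le, COS_bound).
  assert (0 < gauss al x) by apply gauss_pos; nra.
- apply gauss_cos_trunc_lim; exact al_pos.
Qed.

Lemma is_RInt_improper_gauss_sin t : is_RInt_improper (gauss_sin al t) 0.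
Proof.
apply is_RInt_improper_of_sym; [apply continuous_gauss_sin| |].
- intros x; unfold gauss_sin; rewrite Rabs_mult, (Rabs_pos_eq (gauss al x))
    by apply Rlt_le, gauss_pos.
  assert (Rabs (sin (t * x)) <= 1) by (apply Rabs_le, SIN_bound).
  assert (0 < gauss al x) by apply gauss_pos; nra.
- intros eps He; exists 1; split; [lra|]; intros A _.
  rewrite RInt_odd; [rewrite Rminus_0_r, Rabs_R0; exact He|apply continuous_gauss_sin|].
  intros x; unfold gauss_sin; rewrite gauss_even.
  replace (t * - x) with (- (t * x)) by ring; rewrite sin_neg; ring.
Qed.
End GaussianDominated.

(** * Complex arithmetic and the expansion of [H_n] *)

Lemma Cscal_Cscal a b z : Cscal a (Cscal b z) = Cscal (a * b) z.
Proof. destruct z; unfold Cscal; cbn; f_equal; ring. Qed.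

Lemma Cexpi_add a b : Cexpi (a + b) = Cmul (Cexpi a) (Cexpi b).
Proof. unfold Cexpi, Cmul; cbn; rewrite cos_plus, sin_plus; f_equal; ring. Qed.

Lemma Cpow_mul_expi z th m :
  Cpow (Cmul z (Cexpi th)) m = Cmul (Cpow z m) (Cexpi (INR m * th)).
Proof.
induction m as [|m IH].
- unfold Cpow, Cmul, Cexpi, C1; cbn; rewrite Rmult_0_l, cos_0, sin_0; f_equal; ring.
- cbn [Cpow]; rewrite IH, S_INR.
  replace ((INR m + 1) * th) with (th + INR m * th) by ring; rewrite Cexpi_add.
  destruct z as [z1 z2], (Cpow (z1, z2) m) as [p1 p2].
  unfold Cmul, Cexpi; cbn; f_equal; ring.
Qed.

Lemma Cpow_scal c z m : Cpow (Cscal c z) m = Cscal (c ^ m) (Cpow z m).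
Proof.
induction m as [|m IH]; cbn [Cpow pow].
- unfold Cscal, C1; cbn; f_equal; ring.
- rewrite IH; destruct z as [z1 z2], (Cpow (z1, z2) m) as [p1 p2].
  unfold Cscal, Cmul; cbn; f_equal; ring.
Qed.

Lemma Cmul_Csum_l F N w : Cmul (Csum F N) w = Csum (fun k => Cmul (F k) w) N.
Proof.
induction N as [|N IH]; cbn [Csum].
- destruct w; unfold Cmul, C0; cbn; f_equal; ring.
- rewrite <- IH; destruct (Csum F N), (F N), w; unfold Cmul, Cadd; cbn; f_equal; ring.
Qed.

Lemma Cscal_Csum c F N : Cscal c (Csum F N) = Csum (fun k => Cscal c (F k)) N.
Proof.
induction N as [|N IH]; cbn [Csum].
- unfold Cscal, C0; cbn; f_equal; ring.
- rewrite <- IH; destruct (Csum F N), (F N); unfold Cscal, Cadd; cbn; f_equal; ring.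
Qed.

Lemma Csum_ext F G N : (forall k, (k < N)%nat -> F k = G k) -> Csum F N = Csum G N.
Proof.
induction N as [|N IH]; intros H; cbn [Csum]; [reflexivity|].
rewrite IH, H; [reflexivity|lia|intros k Hk; apply H; lia].
Qed.

Lemma Hq_expi_mul_expi n z s r kappa x y :
  Cmul (Hq n (Cmul z (Cexpi (kappa * x))) s r) (Cexpi (x * y)) =
  Csum (fun k => Cscal (cnk n k r * s ^ k)
     (Cmul (Cpow z (n - 2 * k)) (Cexpi ((INR (n - 2 * k) * kappa + y) * x))))
   (S (Nat.div2 n)).
Proof.
unfold Hq; rewrite Cmul_Csum_l; apply Csum_ext; intros k _.
rewrite Cpow_mul_expi.
replace ((INR (n - 2 * k) * kappa + y) * x) with (INR (n - 2 * k) * (kappa * x) + x * y)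
  by ring.
rewrite Cexpi_add.
destruct (Cpow z (n - 2 * k)) as [p1 p2], (Cexpi (INR (n - 2 * k) * (kappa * x))) as [u1 u2],
  (Cexpi (x * y)) as [v1 v2].
unfold Cscal, Cmul; cbn; f_equal; ring.
Qed.

Definition is_CInt_improper (f : R -> Cplx) (l : Cplx) : Prop :=
  is_RInt_improper (fun x => Cre (f x)) (Cre l) /\
  is_RInt_improper (fun x => Cim (f x)) (Cim l).

Lemma is_CInt_R_of_improper f l : is_CInt_improper f l -> is_CInt_R f l.
Proof. intros [Hre Him]; split; apply is_RInt_R_of_improper; assumption. Qed.

Lemma is_CInt_improper_ext f g l :
  (forall x, f x = g x) -> is_CInt_improper f l -> is_CInt_improper g l.
Proof.
intros E [Hre Him]; split; eapply is_RInt_improper_ext; eauto;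
  intros x; cbn; now rewrite E.
Qed.

Lemma is_CInt_improper_scal c f l :
  is_CInt_improper f l -> is_CInt_improper (fun x => Cscal c (f x)) (Cscal c l).
Proof. intros [Hre Him]; split; apply is_RInt_improper_scal; assumption. Qed.

Lemma is_CInt_improper_sum (F : nat -> R -> Cplx) (L : nat -> Cplx) N :
  (forall k, (k < N)%nat -> is_CInt_improper (F k) (L k)) ->
  is_CInt_improper (fun x => Csum (fun k => F k x) N) (Csum L N).
Proof.
induction N as [|N IH]; intros H; cbn.
- split; apply is_RInt_improper_zero.
- destruct (IH ltac:(intros k Hk; apply H; lia)) as [Hre Him].
  destruct (H N ltac:(lia)) as [Kre Kim].
  split; apply is_RInt_improper_plus; assumption.
Qed.

Lemma is_CInt_improper_gauss_expi al B t : 0 < al ->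
  is_CInt_improper (fun x => Cscal (gauss al x) (Cmul B (Cexpi (t * x))))
    (Cscal (2 * gauss_half al * exp (- (t ^ 2 / (4 * al)))) B).
Proof.
intros Hal; destruct B as [b1 b2].
set (L := 2 * gauss_half al * exp (- (t ^ 2 / (4 * al)))).
assert (Hc := is_RInt_improper_gauss_cos al Hal t); fold L in Hc.
assert (Hs := is_RInt_improper_gauss_sin al Hal t).
split; cbn.
- replace (L * b1) with (b1 * L + - b2 * 0) by ring.
  eapply is_RInt_improper_ext; [|apply is_RInt_improper_plus;
    [apply (is_RInt_improper_scal b1 _ _ Hc)|apply (is_RInt_improper_scal (- b2) _ _ Hs)]].
  intros x; unfold gauss_cos, gauss_sin; cbn; ring.
- replace (L * b2) with (b2 * L + b1 * 0) by ring.
  eapply is_RInt_improper_ext; [|apply is_RInt_improper_plus;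
    [apply (is_RInt_improper_scal b2 _ _ Hc)|apply (is_RInt_improper_scal b1 _ _ Hs)]].
  intros x; unfold gauss_cos, gauss_sin; cbn; ring.
Qed.

Lemma is_CInt_improper_normal_expi s B t : 0 < s ->
  is_CInt_improper
    (fun x => Cscal (/ sqrt (2 * PI * s) * exp (- (x ^ 2 / (2 * s)))) (Cmul B (Cexpi (t * x))))
    (Cscal (exp (- (s * t ^ 2 / 2))) B).
Proof.
intros Hs.
set (al := / (2 * s)).
assert (Hal : 0 < al) by (apply Rinv_0_lt_compat; lra).
assert (Hsq : 0 < sqrt (2 * PI * s)) by (apply sqrt_lt_R0; assert (H := PI_RGT_0); nra).
assert (HL : 2 * gauss_half al = sqrt (2 * PI * s)).
{ unfold gauss_half; replace (PI / al) with (2 * PI * s) by (unfold al; field; lra); field. }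
replace (Cscal (exp (- (s * t ^ 2 / 2))) B)
  with (Cscal (/ sqrt (2 * PI * s)) (Cscal (2 * gauss_half al * exp (- (t ^ 2 / (4 * al)))) B)).
- eapply is_CInt_improper_ext;
    [|apply is_CInt_improper_scal, is_CInt_improper_gauss_expi, Hal].
  intros x; cbv beta; rewrite Cscal_Cscal; do 3 f_equal.
  unfold gauss, al; f_equal; field; lra.
- rewrite Cscal_Cscal, HL; f_equal.
  replace (t ^ 2 / (4 * al)) with (s * t ^ 2 / 2) by (unfold al; field; lra).
  field; lra.
Qed.

(** * The coefficients [c_{n,k}] under [q -> 1/q] *)

Section QInversion.
Variable q : R.
Hypothesis q_pos : 0 < q.
Hypothesis q_neq1 : q <> 1.

Lemma qnum_neq0 j : (0 < j)%nat -> qnum q j <> 0.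
Proof.
intros Hj; unfold qnum, Rdiv; apply Rmult_integral_contrapositive_currified.
- intros Hpow; destruct (pow_R1 q j ltac:(lra)) as [Habs|]; [|lia].
  rewrite Rabs_pos_eq in Habs; lra.
- apply Rinv_neq_0_compat; lra.
Qed.

Lemma qfact_neq0 j : qfact q j <> 0.
Proof.
induction j; cbn [qfact]; [lra|].
apply Rmult_integral_contrapositive_currified; [assumption|apply qnum_neq0; lia].
Qed.

Lemma qdfact_neq0 j : qdfact q j <> 0.
Proof.
induction j; cbn [qdfact]; [lra|].
apply Rmult_integral_contrapositive_currified; [assumption|apply qnum_neq0; lia].
Qed.

Lemma qnum_inv j : qnum (/ q) j = Rpower q (1 - INR j) * qnum q j.
Proof.
unfold Rminus; rewrite Rpower_plus, Rpower_1, Rpower_Ropp, Rpower_pow by lra.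
unfold qnum; rewrite pow_inv.
assert (0 < q ^ j) by (apply pow_lt; lra).
field; lra.
Qed.

Lemma qfact_inv j : qfact (/ q) j = Rpower q (- (INR j * (INR j - 1) / 2)) * qfact q j.
Proof.
induction j as [|j IH]; cbn [qfact].
- replace (- (INR 0 * (INR 0 - 1) / 2)) with 0 by (cbn; field).
  rewrite Rpower_O by lra; ring.
- rewrite IH, qnum_inv.
  replace (- (INR (S j) * (INR (S j) - 1) / 2))
    with (- (INR j * (INR j - 1) / 2) + (1 - INR (S j))) by (rewrite S_INR; field).
  rewrite Rpower_plus; ring.
Qed.

Lemma qdfact_inv j : qdfact (/ q) j = Rpower q (- (INR j ^ 2)) * qdfact q j.
Proof.
induction j as [|j IH]; cbn [qdfact].
- replace (- (INR 0 ^ 2)) with 0 by (cbn; ring).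
  rewrite Rpower_O by lra; ring.
- rewrite IH, qnum_inv.
  replace (- (INR (S j) ^ 2)) with (- (INR j ^ 2) + (1 - INR (2 * S j)))
    by (rewrite mult_INR, !S_INR; cbn; ring).
  rewrite Rpower_plus; ring.
Qed.

Lemma cnk_inv n k : (2 * k <= n)%nat ->
  cnk n k q = cnk n k (/ q) * Rpower q (2 * INR n * INR k - 3 * INR k - INR k ^ 2).
Proof.
intros Hk; unfold cnk.
rewrite pow_inv, !qfact_inv, qdfact_inv, <- (Rpower_pow _ q) by lra.
assert (Hkk : INR (k * (k - 1)) = INR k * INR k - INR k).
{ destruct k as [|k]; [cbn; ring|].
  rewrite mult_INR; replace (S k - 1)%nat with k by lia; rewrite S_INR; ring. }
assert (Hm : INR (n - 2 * k) = INR n - 2 * INR k)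
  by (rewrite minus_INR, mult_INR by lia; cbn; ring).
rewrite Hkk, Hm; set (a := INR n); set (c := INR k).
assert (Hpos : forall x, 0 < Rpower q x) by (intros; apply exp_pos).
assert (key : Rpower q (- (a * (a - 1) / 2)) * Rpower q (2 * a * c - 3 * c - c ^ 2)
  = Rpower q (c * c - c) * Rpower q (c * c - c)
    * Rpower q (- ((a - 2 * c) * (a - 2 * c - 1) / 2)) * Rpower q (- c ^ 2)).
{ rewrite <- !Rpower_plus; f_equal; field. }
replace (Rpower q (2 * a * c - 3 * c - c ^ 2))
  with (Rpower q (c * c - c) * Rpower q (c * c - c)
        * Rpower q (- ((a - 2 * c) * (a - 2 * c - 1) / 2)) * Rpower q (- c ^ 2)
        / Rpower q (- (a * (a - 1) / 2)))
  by (rewrite <- key; field; apply Rgt_not_eq, Hpos).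
field; repeat split; auto using qfact_neq0, qdfact_neq0; apply Rgt_not_eq, Hpos.
Qed.
End QInversion.

Lemma exp_pow a k : exp a ^ k = exp (INR k * a).
Proof. rewrite <- Rpower_pow by apply exp_pos; unfold Rpower; now rewrite ln_exp. Qed.

Lemma cnk_gauss_shift s kappa y n k q : kappa <> 0 -> 0 < s -> (2 * k <= n)%nat ->
  q = exp (- (2 * s * kappa ^ 2)) ->
  cnk n k q * s ^ k * exp (- (s * (INR (n - 2 * k) * kappa + y) ^ 2 / 2))
  = Rpower q (INR n ^ 2 / 4) * exp (- (s * y ^ 2 / 2))
    * (cnk n k (/ q) * (Rpower q (INR n - 3) * s) ^ k)
    * exp (- (s * kappa * y)) ^ (n - 2 * k).
Proof.
intros Hk Hs Hkn Hq.
assert (Hq1 : q <> 1).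
{ rewrite Hq, <- exp_0; intros E; apply exp_inv in E.
  assert (0 < kappa ^ 2) by (apply pow2_gt_0; exact Hk).
  nra. }
rewrite (cnk_inv q ltac:(rewrite Hq; apply exp_pos) Hq1 n k Hkn).
rewrite Rpow_mult_distr, exp_pow.
rewrite minus_INR, mult_INR by lia; replace (INR 2) with 2 by (cbn; ring).
assert (Hln : ln q = - (2 * s * kappa ^ 2)) by (rewrite Hq; apply ln_exp).
unfold Rpower; rewrite Hln, exp_pow.
set (a := INR n); set (c := INR k).
(* Expanding the square gives [q ^ ((n - 2 k) ^ 2 / 4)] times the [y] terms. *)
assert (E : exp ((2 * a * c - 3 * c - c ^ 2) * - (2 * s * kappa ^ 2))
            * exp (- (s * ((a - 2 * c) * kappa + y) ^ 2 / 2))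
          = exp (a ^ 2 / 4 * - (2 * s * kappa ^ 2)) * exp (- (s * y ^ 2 / 2))
            * exp (c * ((a - 3) * - (2 * s * kappa ^ 2)))
            * exp ((a - 2 * c) * - (s * kappa * y))).
{ rewrite <- !exp_plus; f_equal; field. }
transitivity (cnk n k (/ q) * s ^ k
  * (exp ((2 * a * c - 3 * c - c ^ 2) * - (2 * s * kappa ^ 2))
     * exp (- (s * ((a - 2 * c) * kappa + y) ^ 2 / 2)))); [ring|].
rewrite E; ring.
Qed.

Theorem mainTheorem11 (s kappa : R) (b : Cplx) (n : nat) (y : R) :
  0 < s -> 0 < kappa ->
  let q := exp (- (2 * s * kappa ^ 2)) in
  is_CInt_R
    (fun x : R =>
       Cscal (/ sqrt (2 * PI * s) * exp (- (x ^ 2 / (2 * s))))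
         (Cmul (Hq n (Cmul b (Cexpi (kappa * x))) s q) (Cexpi (x * y))))
    (Cscal (Rpower q (INR n ^ 2 / 4) * exp (- (s * y ^ 2 / 2)))
       (Hq n (Cscal (exp (- (s * kappa * y))) b) (Rpower q (INR n - 3) * s) (/ q))).
Proof.
intros Hs Hk q.
apply is_CInt_R_of_improper.
eapply is_CInt_improper_ext.
{ intros x; symmetry; rewrite Hq_expi_mul_expi, Cscal_Csum; reflexivity. }
unfold Hq; rewrite Cscal_Csum.
apply is_CInt_improper_sum; intros k Hk2.
assert (Hkn : (2 * k <= n)%nat).
{ assert (H := Nat.div2_odd n); destruct (Nat.odd n); cbn in H; lia. }
eapply is_CInt_improper_ext.
{ intros x; symmetry; rewrite Cscal_Cscal, Rmult_comm, <- Cscal_Cscal; reflexivity. }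
replace (Cscal _ (Cscal _ (Cpow (Cscal _ b) _)))
  with (Cscal (cnk n k q * s ^ k)
         (Cscal (exp (- (s * (INR (n - 2 * k) * kappa + y) ^ 2 / 2))) (Cpow b (n - 2 * k)))).
- apply is_CInt_improper_scal, is_CInt_improper_normal_expi, Hs.
- rewrite Cpow_scal, !Cscal_Cscal; f_equal.
  rewrite <- Rmult_assoc, (cnk_gauss_shift s kappa y n k q) by (lra || lia || reflexivity).
  ring.
Qed.
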